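(* Let $0<q<1$, $0\le p<1$. Let $k_n(x)=q^{-n}S_n(qx;pq,q)$ (the monic kernel polynomials of $S_n(x;p,q)$), with recurrence $k_n(x)=(x-d_n)k_{n-1}(x)-\nu_nk_{n-2}(x)$, $n\ge1$, $k_{-1}=0$, $k_0=1$, and let $\beta_n=\nu_{n+1}/(d_nd_{n+1})$, $n\ge1$. Then \[ \beta_n=\frac{q(1-q^n)(1-pq^n)}{(1+q-(1+p)q^n)(1+q-(1+p)q^{n+1})},\quad n\ge1; \] the maximal and minimal parameter sequences of $(\beta_n)$ are \[ M_n=\frac{q}{1+q-(1+p)q^{n+1}}\frac{\Delta_n}{\Delta_{n+1}},\qquad m_n=\frac{q(1-q^n)}{1+q-(1+p)q^{n+1}},\quad n\ge0; \] and the sequence \[ h_n=\frac{q(1-pq^n)}{1+q-(1+p)q^{n+1}},\quad n\ge0, \] is a parameter sequence of $(\beta_n)$ whose shell polynomials $p^h_n$ are exactly the monic generalized Stieltjes–Wigert polynomials $S_n(x;p,q)$.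
   Context: $(a;q)_n=\prod_{k=1}^n(1-aq^{k-1})$ for $n\in\{0,1,\dots\}\cup\{\infty\}$, $\begin{bmatrix}n\\k\end{bmatrix}_q=\frac{(q;q)_n}{(q;q)_k(q;q)_{n-k}}$, and $\Delta_n=(pq^n;q)_\infty-(q^n;q)_\infty$. The monic generalized Stieltjes–Wigert polynomials are $S_n(x;p,q)=(-1)^nq^{-n(n+1/2)}(p;q)_n\sum_{k=0}^n\begin{bmatrix}n\\k\end{bmatrix}_q\frac{q^{k^2}(-\sqrt q x)^k}{(p;q)_k}$. A parameter sequence for a chain sequence $(\beta_n)_{n\ge1}$ is a sequence $(h_n)_{n\ge0}$ with $0\le h_0<1$, $0<h_n<1$ for $n\ge1$, and $\beta_n=h_n(1-h_{n-1})$ for $n\ge1$; the minimal parameter sequence is the one with $h_0=0$, and the maximal one is the one whose initial value $h_0$ is the largest possible. Given a parameter sequence $(h_n)$ with $h_0>0$, the shell polynomials $p^h_n$ are the monic polynomials defined by $p^h_n(x)=(x-c^h_n)p^h_{n-1}(x)-\lambda^h_np^h_{n-2}(x)$, $p^h_{-1}=0$, $p^h_0=1$, where $c_1^h=h_0d_1$, $c_{n+1}^h=(1-h_{n-1})d_n+h_nd_{n+1}$ and $\lambda_{n+1}^h=(1-h_{n-1})h_{n-1}d_n^2$ for $n\ge1$. *)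

From HB Require Import structures.
From mathcomp Require Import all_boot all_order all_algebra.
From mathcomp Require Import all_classical all_reals all_analysis.
Set Implicit Arguments. Unset Strict Implicit. Unset Printing Implicit Defensive.
Import Order.TTheory GRing.Theory Num.Theory numFieldNormedType.Exports.
Local Open Scope ring_scope.

Section Defs.
Variable R : realType.

Definition qpoch (a q : R) (n : nat) : R := \prod_(i < n) (1 - a * q ^+ i).

Definition qpoch_inf (a q : R) : R := limn (fun n : nat => qpoch a q n).

Definition qbin (q : R) (n k : nat) : R :=
  qpoch q q n / (qpoch q q k * qpoch q q (n - k)).

Definition Delta (p q : R) (n : nat) : R :=
  qpoch_inf (p * q ^+ n) q - qpoch_inf (q ^+ n) q.

(* monic generalized Stieltjes--Wigert polynomial S_n(x; p, q);
   q^{-n(n+1/2)} is written q^{-n^2} * (sqrt q)^{-n} *)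
Definition SW (n : nat) (p q : R) : {poly R} :=
  ((-1) ^+ n * (q ^+ (n * n))^-1 * (Num.sqrt q ^+ n)^-1 * qpoch p q n) *:
  \sum_(k < n.+1)
     (qbin q n k * q ^+ (k * k) / qpoch p q k * (- Num.sqrt q) ^+ k) *: 'X^k.

Definition kernelSW (p q : R) (n : nat) : {poly R} :=
  (q ^+ n)^-1 *: (SW n (p * q) q \Po (q *: 'X)).

Definition three_term (k : nat -> {poly R}) (d nu : nat -> R) : Prop :=
  k 0%N = 1 /\
  forall n : nat, k n.+1 =
    ('X - (d n.+1)%:P) * k n - (nu n.+1)%:P * (if n is m.+1 then k m else 0).

Definition param_seq (beta h : nat -> R) : Prop :=
  [/\ 0 <= h 0%N < 1,
      (forall n : nat, (0 < n)%N -> 0 < h n < 1) &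
      (forall n : nat, (0 < n)%N -> beta n = h n * (1 - h n.-1))].

Definition is_min_param (beta h : nat -> R) : Prop :=
  param_seq beta h /\ h 0%N = 0.

Definition is_max_param (beta h : nat -> R) : Prop :=
  param_seq beta h /\ forall g, param_seq beta g -> g 0%N <= h 0%N.

Definition shell_c (h d : nat -> R) (n : nat) : R :=
  match n with
  | 0 => 0
  | m.+1 => if m == 0%N then h 0%N * d 1%N
            else (1 - h m.-1) * d m + h m * d m.+1
  end.

Definition shell_lam (h d : nat -> R) (n : nat) : R :=
  match n with
  | 0 => 0
  | m.+1 => if m == 0%N then 0
            else (1 - h m.-1) * h m.-1 * d m ^+ 2
  end.

(* pairs (p_{n-1}, p_n), with p_{-1} = 0, p_0 = 1 *)
Fixpoint shell_aux (h d : nat -> R) (n : nat) : {poly R} * {poly R} :=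
  match n with
  | 0 => (0, 1)
  | m.+1 => let: (a, b) := shell_aux h d m in
            (b, ('X - (shell_c h d m.+1)%:P) * b - (shell_lam h d m.+1)%:P * a)
  end.

Definition shell (h d : nat -> R) (n : nat) : {poly R} := (shell_aux h d n).2.

End Defs.

(* S_n satisfies a three-term recurrence: after the change of variable
   x -> -sqrt q x it is a q-Pascal identity for the coefficients, and rescaling by
   q then gives the recurrence coefficients d_n, nu_n of the kernel polynomials
   explicitly.  For the h_n of the statement,
     h_n d_{n+1} = (1 - p q^n) / (q^{2n+1} sqrt q),
     (1 - h_n) d_{n+1} = (1 - q^{n+1}) / (q^{2n+2} sqrt q),
   so nu_{n+2} = (1 - h_n) d_{n+1} * h_{n+1} d_{n+2}, i.e. beta_n = h_n (1 - h_{n-1}),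
   and the shell coefficients of h are the recurrence coefficients of S_n.
   The sequences m_n and M_n satisfy the same chain relation, the latter by the
   recurrence (1 + q - (1+p) q^{n+1}) Delta_{n+1} - q Delta_n
             = (1 - q^{n+1}) (1 - p q^{n+1}) Delta_{n+2}.
   Every parameter sequence g satisfies
     M_0 prod (1 - g_k) = (M_0 - g_0) prod (1 - m_k) + g_0 prod (1 - M_k),
   while prod_{k<n} (1 - M_k) / prod_{k<n} (1 - m_k) = (q;q)_n Delta_{n+1} / Delta_1
   tends to 0; hence g_0 <= M_0. *)

From HB Require Import structures.
From mathcomp Require Import all_boot all_order all_algebra.
From mathcomp Require Import all_classical all_reals all_analysis.
From mathcomp Require Import ring lra zify.
Import Order.TTheory GRing.Theory Num.Theory numFieldNormedType.Exports.
Set Implicit Arguments. Unset Strict Implicit. Unset Printing Implicit Defensive.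
Local Open Scope ring_scope.

Section QPochhammer.
Variable R : realType.
Variable q : R.
Hypotheses (q_gt0 : 0 < q) (q_lt1 : q < 1).

Lemma qpoch0 (a : R) : qpoch a q 0 = 1.
Proof. by rewrite /qpoch big_ord0. Qed.

Lemma qpochS (a : R) n : qpoch a q n.+1 = qpoch a q n * (1 - a * q ^+ n).
Proof. by rewrite /qpoch big_ord_recr. Qed.

Lemma qpoch_recl (a : R) n : qpoch a q n.+1 = (1 - a) * qpoch (a * q) q n.
Proof.
rewrite /qpoch big_ord_recl expr0 mulr1; congr (_ * _).
by apply: eq_bigr => i _; rewrite /bump /= exprS mulrA.
Qed.

Lemma qX_lt1 n : q ^+ n.+1 < 1.
Proof. by rewrite exprn_ilt1 // ltW. Qed.

Lemma onem_qX_neq0 n : 1 - q ^+ n.+1 != 0.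
Proof. by rewrite subr_eq0 eq_sym lt_eqF ?qX_lt1. Qed.

Lemma onem_aqX_gt0 (a : R) n : 0 <= a -> a < 1 -> 0 < 1 - a * q ^+ n.
Proof.
move=> a_ge0 a_lt1; rewrite subr_gt0 (le_lt_trans _ a_lt1) //.
by rewrite ler_piMr // exprn_ile1 // ltW.
Qed.

Lemma qpoch_gt0 (a : R) n : 0 <= a -> a < 1 -> 0 < qpoch a q n.
Proof. by move=> a_ge0 a_lt1; apply: prodr_gt0 => i _; apply: onem_aqX_gt0. Qed.

Lemma onem_aqX_ge0 (a : R) n : 0 <= a -> a <= 1 -> 0 <= 1 - a * q ^+ n.
Proof.
move=> a_ge0 a_le1; rewrite subr_ge0 (le_trans _ a_le1) //.
by rewrite ler_piMr // exprn_ile1 // ltW.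
Qed.

Lemma onem_aqX_le1 (a : R) n : 0 <= a -> 1 - a * q ^+ n <= 1.
Proof. by move=> a_ge0; rewrite gerBl mulr_ge0 // exprn_ge0 // ltW. Qed.

Lemma qpoch_ge0 (a : R) n : 0 <= a -> a <= 1 -> 0 <= qpoch a q n.
Proof. by move=> a_ge0 a_le1; apply: prodr_ge0 => i _; apply: onem_aqX_ge0. Qed.

Lemma qpoch_le1 (a : R) n : 0 <= a -> a <= 1 -> qpoch a q n <= 1.
Proof.
move=> a_ge0 a_le1; apply: prodr_ile1 => i _.
by rewrite onem_aqX_ge0 ?onem_aqX_le1.
Qed.

Lemma qpoch_ge_sum (a : R) n : 0 <= a -> a <= 1 ->
  1 - a * (1 - q ^+ n) / (1 - q) <= qpoch a q n.
Proof.
move=> a_ge0 a_le1; have q1 : 1 - q != 0 by rewrite subr_eq0 eq_sym lt_eqF.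
elim: n => [|n IH]; first by rewrite qpoch0 expr0 subrr mulr0 mul0r subr0.
have -> : 1 - a * (1 - q ^+ n.+1) / (1 - q) =
          1 - a * (1 - q ^+ n) / (1 - q) - a * q ^+ n by rewrite exprS; field.
rewrite qpochS (mulrBr (qpoch a q n)) mulr1 lerB // ler_piMl ?qpoch_le1 //.
by rewrite mulr_ge0 // exprn_ge0 // ltW.
Qed.


Lemma exists_qX_lt (e : R) : 0 < e -> exists K, q ^+ K < e.
Proof.
move=> e_gt0; have q_norm : `|q| < 1 by rewrite ger0_norm // ltW.
have [N _ HN] := cvgr0_norm_lt _ (cvg_expr q_norm) _ e_gt0.
by exists N; have := HN N (leqnn N); rewrite /= ger0_norm // exprn_ge0 // ltW.
Qed.

Lemma qpoch_cvg (a : R) : 0 <= a -> a <= 1 -> cvgn (qpoch a q).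
Proof.
move=> a_ge0 a_le1; apply: nonincreasing_is_cvgn.
  apply/nonincreasing_seqP => n; rewrite qpochS ler_piMr ?qpoch_ge0 //.
  exact: onem_aqX_le1.
by exists 0 => _ [n _ <-]; apply: qpoch_ge0.
Qed.

Lemma qpoch_inf_ge (a : R) : 0 <= a -> a <= 1 -> 1 - a / (1 - q) <= qpoch_inf a q.
Proof.
move=> a_ge0 a_le1; apply: limr_ge; first exact: qpoch_cvg.
apply: nearW => n; apply: le_trans (qpoch_ge_sum n a_ge0 a_le1).
rewrite lerB // ler_wpM2r ?invr_ge0 ?subr_ge0 ?(ltW q_lt1) // ler_piMr //.
by rewrite gerBl exprn_ge0 // ltW.
Qed.

Lemma qpoch_inf_le1 (a : R) : 0 <= a -> a <= 1 -> qpoch_inf a q <= 1.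
Proof.
move=> a_ge0 a_le1; apply: limr_le; first exact: qpoch_cvg.
by apply: nearW => n; apply: qpoch_le1.
Qed.

Lemma qpoch_inf_le (a b : R) : 0 <= a -> a <= b -> b <= 1 ->
  qpoch_inf b q <= qpoch_inf a q.
Proof.
move=> a_ge0 a_le_b b_le1.
have b_ge0 : 0 <= b by apply: le_trans a_le_b.
have a_le1 : a <= 1 by apply: le_trans b_le1.
apply: ler_lim; [exact: qpoch_cvg | exact: qpoch_cvg |].
apply: nearW => n; apply: ler_prod => i _.
by rewrite onem_aqX_ge0 //= lerB // ler_wpM2r // exprn_ge0 // ltW.
Qed.

Lemma qpoch_inf_recl (a : R) : 0 <= a -> a <= 1 ->
  qpoch_inf a q = (1 - a) * qpoch_inf (a * q) q.
Proof.
move=> a_ge0 a_le1.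
have aq_ge0 : 0 <= a * q by rewrite mulr_ge0 // ltW.
have aq_le1 : a * q <= 1 by rewrite (le_trans _ a_le1) // ler_piMr // ltW.
apply: cvg_lim => //; rewrite -cvg_shiftS.
under eq_fun do rewrite qpoch_recl.
exact: cvgMl_tmp (qpoch_cvg aq_ge0 aq_le1).
Qed.

Lemma qpoch_inf_split (a : R) K : 0 <= a -> a <= 1 ->
  qpoch_inf a q = qpoch a q K * qpoch_inf (a * q ^+ K) q.
Proof.
move=> a_ge0 a_le1; elim: K => [|K ->]; first by rewrite qpoch0 expr0 mulr1 mul1r.
have aqK_le1 : a * q ^+ K <= 1.
  by rewrite (le_trans _ a_le1) // ler_piMr // exprn_ile1 // ltW.
rewrite qpoch_inf_recl ?mulr_ge0 ?exprn_ge0 ?(ltW q_gt0) //.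
by rewrite qpochS exprSr !mulrA.
Qed.

Lemma qpoch_inf_gt0 (a : R) : 0 <= a -> a < 1 -> 0 < qpoch_inf a q.
Proof.
move=> a_ge0 a_lt1; have onem_q_gt0 : 0 < 1 - q by rewrite subr_gt0.
have [K qK_lt] := exists_qX_lt onem_q_gt0.
have aqK_le : a * q ^+ K <= q ^+ K by rewrite ler_piMl ?exprn_ge0 ?ltW.
rewrite (qpoch_inf_split K a_ge0 (ltW a_lt1)) mulr_gt0 ?qpoch_gt0 //.
apply: lt_le_trans (qpoch_inf_ge _ _); last first.
- by rewrite (le_trans aqK_le) // exprn_ile1 // ltW.
- by rewrite mulr_ge0 // exprn_ge0 // ltW.
by rewrite subr_gt0 ltr_pdivrMr // mul1r (le_lt_trans aqK_le).
Qed.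

End QPochhammer.

Section QBinomial.
Variable R : realType.
Variable q : R.
Hypotheses (q_gt0 : 0 < q) (q_lt1 : q < 1).

(* Equals [qbin q n k] for [k <= n] (qbinE) but vanishes for [k > n], where the
   truncated subtraction in [qbin] does not. *)
Definition qbin_prod (n k : nat) : R :=
  \prod_(i < k) ((1 - q ^+ (n - i)) / (1 - q ^+ i.+1)).

Lemma qbin_prod0 n : qbin_prod n 0 = 1.
Proof. by rewrite /qbin_prod big_ord0. Qed.

Lemma qbin_prodS n k :
  qbin_prod n k.+1 = qbin_prod n k * ((1 - q ^+ (n - k)) / (1 - q ^+ k.+1)).
Proof. by rewrite /qbin_prod big_ord_recr. Qed.

Lemma qbin_prodSS n k :
  qbin_prod n.+1 k.+1 = qbin_prod n k * ((1 - q ^+ n.+1) / (1 - q ^+ k.+1)).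
Proof.
rewrite /qbin_prod !prodf_div big_ord_recl [in X in _ / X]big_ord_recr /=.
by rewrite subn0 mulrCA invfM !mulrA mulrAC.
Qed.

Lemma qbin_prod_eq0 n k : (n < k)%N -> qbin_prod n k = 0.
Proof.
elim: k => // k IH; rewrite ltnS leq_eqVlt qbin_prodS => /predU1P[<-|/IH ->].
  by rewrite subnn expr0 subrr mul0r mulr0.
by rewrite mul0r.
Qed.

Lemma qbin_prod_pred n j :
  q * (1 - q ^+ n) * qbin_prod n.-1 j.+1 = (q - q ^+ (n - j)) * qbin_prod n j.+1.
Proof.
case: n => [|m]; first by rewrite !qbin_prod_eq0 // !mulr0.
rewrite qbin_prodSS qbin_prodS /=.
have [j_le_m | m_lt_j] := leqP j m; last by rewrite qbin_prod_eq0 // !(mulr0, mul0r).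
by rewrite subSn // [q ^+ (m - j).+1]exprS; ring.
Qed.

Lemma qbinE n k : (k <= n)%N -> qbin q n k = qbin_prod n k.
Proof.
have qpoch_neq0 m : qpoch q q m != 0 by rewrite gt_eqF ?qpoch_gt0 // ltW.
elim: k => [|k IH] k_le_n.
  by rewrite /qbin qbin_prod0 qpoch0 mul1r subn0 divff.
rewrite qbin_prodS -IH 1?ltnW // /qbin -(subnSK k_le_n) !qpochS -!exprS subnSK //.
have := onem_qX_neq0 q_gt0 q_lt1 k; have := onem_qX_neq0 q_gt0 q_lt1 (n - k.+1).
rewrite -subSn // subSS => nk0 k0.
by field; rewrite nk0 k0 !qpoch_neq0.
Qed.

End QBinomial.

Section Delta.
Variable R : realType.
Variables p q : R.
Hypotheses (q_gt0 : 0 < q) (q_lt1 : q < 1) (p_ge0 : 0 <= p) (p_lt1 : p < 1).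

Let qX_ge0 n : 0 <= q ^+ n. Proof. by rewrite exprn_ge0 // ltW. Qed.
Let qX_le1 n : q ^+ n <= 1. Proof. by rewrite exprn_ile1 // ltW. Qed.
Let pqX_ge0 n : 0 <= p * q ^+ n. Proof. exact: mulr_ge0. Qed.
Let pqX_le_qX n : p * q ^+ n <= q ^+ n. Proof. by rewrite ler_piMl // ltW. Qed.
Let pqX_le1 n : p * q ^+ n <= 1. Proof. exact: le_trans (pqX_le_qX n) (qX_le1 n). Qed.

Lemma qpoch_inf_pqX_recl n :
  qpoch_inf (p * q ^+ n) q = (1 - p * q ^+ n) * qpoch_inf (p * q ^+ n.+1) q.
Proof. by rewrite qpoch_inf_recl // exprSr mulrA. Qed.

Lemma qpoch_inf_qX_recl n :
  qpoch_inf (q ^+ n) q = (1 - q ^+ n) * qpoch_inf (q ^+ n.+1) q.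
Proof. by rewrite qpoch_inf_recl // exprSr. Qed.

Lemma Delta_rec n :
  (1 + q - (1 + p) * q ^+ n.+1) * Delta p q n.+1 - q * Delta p q n
  = (1 - q ^+ n.+1) * (1 - p * q ^+ n.+1) * Delta p q n.+2.
Proof.
rewrite /Delta (qpoch_inf_pqX_recl n) (qpoch_inf_qX_recl n).
by rewrite (qpoch_inf_pqX_recl n.+1) (qpoch_inf_qX_recl n.+1) !exprS; ring.
Qed.

Lemma Delta_gt0 n : 0 < Delta p q n.
Proof.
have A_gt0 : 0 < qpoch_inf (p * q ^+ n.+1) q.
  by rewrite qpoch_inf_gt0 // (le_lt_trans _ p_lt1) // ler_piMr.
have B_le_A : qpoch_inf (q ^+ n.+1) q <= qpoch_inf (p * q ^+ n.+1) q.
  exact: qpoch_inf_le.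
rewrite /Delta qpoch_inf_pqX_recl qpoch_inf_qX_recl.
apply: (@lt_le_trans _ _ ((1 - p) * q ^+ n * qpoch_inf (p * q ^+ n.+1) q)).
  by rewrite !mulr_gt0 ?subr_gt0 ?exprn_gt0.
have : (1 - q ^+ n) * qpoch_inf (q ^+ n.+1) q <=
       (1 - q ^+ n) * qpoch_inf (p * q ^+ n.+1) q.
  by rewrite ler_wpM2l // subr_ge0.
lra.
Qed.

Lemma Delta_le n : Delta p q n <= q ^+ n / (1 - q).
Proof.
have := qpoch_inf_le1 q_gt0 q_lt1 (pqX_ge0 n) (pqX_le1 n).
have := qpoch_inf_ge q_gt0 q_lt1 (qX_ge0 n) (qX_le1 n).
rewrite /Delta; lra.
Qed.

End Delta.

Section ThreeTerm.
Variable R : realType.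
Implicit Types (k : nat -> {poly R}) (d nu : nat -> R).

Lemma coef_three_term_step (P Q : {poly R}) c l i :
  (('X - c%:P) * P - l%:P * Q)`_i =
  (if i is j.+1 then P`_j else 0) - c * P`_i - l * Q`_i.
Proof. by rewrite mulrBl !coefB coefXM !coefCM; case: i. Qed.

Lemma coef_comp_polyZX (P : {poly R}) c i : (P \Po (c *: 'X))`_i = c ^+ i * P`_i.
Proof.
have -> : P \Po (c *: 'X) = \poly_(j < size P) (c ^+ j * P`_j).
  rewrite comp_polyE poly_def; apply: eq_bigr => j _.
  by rewrite exprZn scalerA mulrC.
by rewrite coef_poly; case: ltnP => // /leq_sizeP ->; rewrite ?mulr0.
Qed.

Lemma three_term_scale k d nu c : c != 0 -> three_term k d nu ->
  three_term (fun n => (c ^+ n)^-1 *: (k n \Po (c *: 'X)))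
             (fun n => d n / c) (fun n => nu n / c ^+ 2).
Proof.
move=> c0 [k0 kS]; split; first by rewrite k0 comp_polyC expr0 invr1 scale1r.
move=> n; apply/polyP => i.
rewrite coef_three_term_step !coefZ !coef_comp_polyZX kS coef_three_term_step.
case: n => [|m]; case: i => [|i] /=;
  rewrite ?coef0 ?coefZ ?coef_comp_polyZX ?mulr0 ?subr0 ?exprS ?expr0;
  by field; rewrite ?c0 ?expf_neq0.
Qed.

Lemma three_term_coef k d nu : three_term k d nu ->
  forall n, (k n)`_n = 1 /\ forall i, (n < i)%N -> (k n)`_i = 0.
Proof.
move=> [k0 kS]; elim/ltn_ind => -[|n] IH.
  by rewrite k0; split => [|[|i] // _]; rewrite coef1.
have [kn_n kn_gt] := IH n (ltnSn n).
have [kp [-> kp_gt]] : exists kp : {poly R},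
    k n.+1 = ('X - (d n.+1)%:P) * k n - (nu n.+1)%:P * kp /\
    forall i, (n < i)%N -> kp`_i = 0.
  exists (if n is m.+1 then k m else 0); split=> // i.
  by case: n IH {kn_n kn_gt} => [|m] IH hi; rewrite ?coef0 // (IH m _).2 // ltnW.
rewrite coef_three_term_step /= kn_n kn_gt // kp_gt // !mulr0 !subr0.
split=> // -[|i] hi //.
by rewrite coef_three_term_step /= !kn_gt ?kp_gt ?mulr0 ?subr0 //; lia.
Qed.

Lemma three_term_uniq k d nu d' nu' : three_term k d nu -> three_term k d' nu' ->
  (forall n, d' n.+1 = d n.+1) /\ forall n, nu' n.+2 = nu n.+2.
Proof.
move=> T T'.
have d_eq n : d' n.+1 = d n.+1.
  have := congr1 (fun P : {poly R} => P`_n) (etrans (esym (T'.2 n)) (T.2 n)).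
  rewrite /= !coef_three_term_step (three_term_coef T n).1 !mulr1.
  by case: n => [|m]; rewrite ?coef0 ?(three_term_coef T m).2 // !mulr0 !subr0
    => /addrI/oppr_inj.
split=> // n.
have := congr1 (fun P : {poly R} => P`_n) (etrans (esym (T'.2 n.+1)) (T.2 n.+1)).
rewrite /= !coef_three_term_step (three_term_coef T n).1 d_eq !mulr1.
by move/addrI/oppr_inj.
Qed.

Lemma three_term_ext k k' d nu d' nu' : three_term k d nu -> three_term k' d' nu' ->
  (forall n, d n.+1 = d' n.+1) -> (forall n, nu n.+2 = nu' n.+2) ->
  forall n, k n = k' n.
Proof.
move=> [k0 kS] [k'0 k'S] d_eq nu_eq.
suff H : forall n, k n = k' n /\ k n.+1 = k' n.+1 by move=> n; case: (H n).
elim=> [|n [IH1 IH2]]; first by rewrite kS k'S k0 k'0 d_eq !mulr0.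
by split=> //; rewrite kS k'S IH1 IH2 d_eq nu_eq.
Qed.

Lemma shell_three_term (h d : nat -> R) :
  three_term (shell h d) (shell_c h d) (shell_lam h d).
Proof.
have auxE n : shell_aux h d n = (if n is m.+1 then shell h d m else 0, shell h d n).
  by elim: n => [|n IH] //; rewrite /shell /= IH.
by split=> // n; rewrite {1}/shell /= auxE.
Qed.

End ThreeTerm.

Section StieltjesWigert.
Variable R : realType.
Variables p q : R.
Hypotheses (q_gt0 : 0 < q) (q_lt1 : q < 1) (p_ge0 : 0 <= p) (p_lt1 : p < 1).

Definition sw_weight n k : R := qbin_prod q n k * q ^+ (k * k) / qpoch p q k.

(* A monic polynomial without square roots in its coefficients:
   [SW n p q] is [SWr n] rescaled by x -> -sqrt q x (SW_SWr). *)
Definition SWr n : {poly R} :=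
  \poly_(k < n.+1) (qpoch p q n / q ^+ (n * n) * sw_weight n k).

Definition SWr_d n : R :=
  if n is m.+1 then - (1 + q - q * q ^+ m - p * q ^+ m) / (q * (q ^+ m) ^+ 2) else 0.

(* For [m = 0] the factor [1 - q ^+ m] vanishes, so the value of [m.-1] is irrelevant. *)
Definition SWr_nu n : R :=
  if n is m.+1 then q * (1 - q ^+ m) * (1 - p * q ^+ m.-1) / (q ^+ m) ^+ 4 else 0.

Let qX_neq0 n : q ^+ n != 0. Proof. by rewrite expf_neq0 // gt_eqF. Qed.
Let onem_pqX_neq0 n : 1 - p * q ^+ n != 0.
Proof. by rewrite gt_eqF ?onem_aqX_gt0. Qed.
Let qpoch_neq0 n : qpoch p q n != 0.
Proof. by rewrite gt_eqF ?qpoch_gt0. Qed.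
Let onem_qXS_neq0 n : 1 - q ^+ n.+1 != 0.
Proof. exact: onem_qX_neq0. Qed.
Let qX_sqrS n : q ^+ (n.+1 * n.+1) = q ^+ (n * n) * (q * (q ^+ n) ^+ 2).
Proof. by rewrite -exprM -exprS -exprD; congr (_ ^+ _); lia. Qed.

Lemma sw_weight0 n : sw_weight n 0 = 1.
Proof. by rewrite /sw_weight qbin_prod0 qpoch0 mul1r divr1. Qed.

Lemma sw_weight_eq0 n k : (n < k)%N -> sw_weight n k = 0.
Proof. by move=> n_lt_k; rewrite /sw_weight qbin_prod_eq0 // !mul0r. Qed.

Lemma sw_weightS n k : sw_weight n k.+1 = sw_weight n k *
  (q * (q ^+ k) ^+ 2 * (1 - q ^+ (n - k))) / ((1 - q ^+ k.+1) * (1 - p * q ^+ k)).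
Proof.
rewrite /sw_weight qbin_prodS qpochS qX_sqrS.
by field; rewrite qpoch_neq0 onem_pqX_neq0 onem_qXS_neq0.
Qed.

Lemma sw_weightSS n k : sw_weight n.+1 k.+1 = sw_weight n k *
  (q * (q ^+ k) ^+ 2 * (1 - q ^+ n.+1)) / ((1 - q ^+ k.+1) * (1 - p * q ^+ k)).
Proof.
rewrite /sw_weight qbin_prodSS qpochS qX_sqrS.
by field; rewrite qpoch_neq0 onem_pqX_neq0 onem_qXS_neq0.
Qed.

Lemma sw_weight_pred n k :
  q * (1 - q ^+ n) * sw_weight n.-1 k.+1 = (q - q ^+ (n - k)) * sw_weight n k.+1.
Proof. by rewrite /sw_weight !mulrA qbin_prod_pred. Qed.

Lemma sw_weight_rec n i :
  (1 - p * q ^+ n) * sw_weight n.+1 i =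
  q * (q ^+ n) ^+ 2 * (if i is j.+1 then sw_weight n j else 0)
  + (1 + q - q * q ^+ n - p * q ^+ n) * sw_weight n i
  - q * (1 - q ^+ n) * sw_weight n.-1 i.
Proof.
case: i => [|j]; first by rewrite !sw_weight0; ring.
have [n_lt_j | j_le_n] := ltnP n j.
  by rewrite !sw_weight_eq0 //; [ring | lia..].
rewrite sw_weightSS sw_weight_pred sw_weightS.
have [r ->] : exists r, n = (j + r)%N by exists (n - j)%N; rewrite subnKC.
have := onem_qXS_neq0 j; rewrite addKn -addSn !exprD [q ^+ j.+1]exprS => qj1.
by field; rewrite onem_pqX_neq0 qj1.
Qed.

Lemma coef_SWr n k : (SWr n)`_k = qpoch p q n / q ^+ (n * n) * sw_weight n k.
Proof.
by rewrite coef_poly; case: ltnP => // n_lt_k; rewrite sw_weight_eq0 ?mulr0.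
Qed.

Lemma SWr_lead_ratio n : qpoch p q n.+1 / q ^+ (n.+1 * n.+1) =
  qpoch p q n / q ^+ (n * n) * ((1 - p * q ^+ n) / (q * (q ^+ n) ^+ 2)).
Proof.
by rewrite qpochS qX_sqrS; field; rewrite !qX_neq0 gt_eqF.
Qed.

Lemma SWr_three_term : three_term SWr SWr_d SWr_nu.
Proof.
split.
  apply/polyP => k; rewrite coef_SWr coef1 qpoch0 mul0n expr0 divr1 mul1r.
  by case: k => [|k]; rewrite ?sw_weight0 ?sw_weight_eq0.
move=> n; apply/polyP => i; rewrite coef_three_term_step !coef_SWr.
have -> : (if i is j.+1 then (SWr n)`_j else 0) =
          qpoch p q n / q ^+ (n * n) * (if i is j.+1 then sw_weight n j else 0).
  by case: i => [|j]; rewrite ?mulr0 ?coef_SWr.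
have -> : sw_weight n.+1 i = (q * (q ^+ n) ^+ 2 * (if i is j.+1 then sw_weight n j else 0)
    + (1 + q - q * q ^+ n - p * q ^+ n) * sw_weight n i
    - q * (1 - q ^+ n) * sw_weight n.-1 i) / (1 - p * q ^+ n).
  by rewrite -sw_weight_rec; field; rewrite onem_pqX_neq0.
rewrite SWr_lead_ratio.
move: (if i is j.+1 then sw_weight n j else 0) => w'.
case: n => [|m] /=.
  have := onem_pqX_neq0 0.
  rewrite coef0 expr0 subrr mulr1 ?(mul0r, mulr0, subr0) => p1.
  by field; rewrite p1 gt_eqF.
have := onem_pqX_neq0 m.+1.
rewrite coef_SWr !SWr_lead_ratio exprS.
move: (qpoch p q m / q ^+ (m * m)) (q ^+ m) (qX_neq0 m) => L Q Q0 pQ1.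
by field; rewrite pQ1 Q0 gt_eqF.
Qed.

Lemma SW_SWr n :
  SW n p q = ((- Num.sqrt q) ^+ n)^-1 *: (SWr n \Po (- Num.sqrt q *: 'X)).
Proof.
apply/polyP => k; rewrite /SW (_ : \sum_(k < n.+1) _ = \poly_(k < n.+1)
  (qbin q n k * q ^+ (k * k) / qpoch p q k * (- Num.sqrt q) ^+ k)); last first.
  by rewrite poly_def.
rewrite coefZ coef_poly coefZ coef_comp_polyZX coef_SWr.
have s0 : Num.sqrt q != 0 by rewrite gt_eqF ?sqrtr_gt0.
have [k_le_n | n_lt_k] := ltnP k n.+1; last by rewrite sw_weight_eq0 // !mulr0.
rewrite qbinE // /sw_weight (exprNn (Num.sqrt q) n) invfM invr_sign.
by field; rewrite qpoch_neq0 qX_neq0 expf_neq0.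
Qed.

Lemma SW_three_term : three_term (fun n => SW n p q)
  (fun n => SWr_d n / - Num.sqrt q) (fun n => SWr_nu n / (- Num.sqrt q) ^+ 2).
Proof.
rewrite (funext SW_SWr); apply: three_term_scale; last exact: SWr_three_term.
by rewrite oppr_eq0 gt_eqF ?sqrtr_gt0.
Qed.

End StieltjesWigert.

Lemma kernelSW_three_term (R : realType) (p q : R) :
  0 < q -> q < 1 -> 0 <= p -> p < 1 ->
  three_term (kernelSW p q)
    (fun n => SWr_d (p * q) q n / - Num.sqrt q / q)
    (fun n => SWr_nu (p * q) q n / (- Num.sqrt q) ^+ 2 / q ^+ 2).
Proof.
move=> q_gt0 q_lt1 p_ge0 p_lt1; apply: three_term_scale; first by rewrite gt_eqF.
apply: SW_three_term => //; first by rewrite mulr_ge0 // ltW.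
by rewrite (le_lt_trans _ p_lt1) // ler_piMr // ltW.
Qed.

Section ChainSequences.
Variable R : realType.
Variable beta : nat -> R.
Implicit Types g m M : nat -> R.

Definition prod_onem g n : R := \prod_(k < n) (1 - g k).

Lemma prod_onem0 g : prod_onem g 0 = 1.
Proof. by rewrite /prod_onem big_ord0. Qed.

Lemma prod_onemS g n : prod_onem g n.+1 = prod_onem g n * (1 - g n).
Proof. by rewrite /prod_onem big_ord_recr. Qed.

Lemma prod_onem_gt0 g n : param_seq beta g -> 0 < prod_onem g n.
Proof.
case=> /andP[_ g0_lt1] g_lt1 _; apply: prodr_gt0 => -[[|k] _] _ /=.
  by rewrite subr_gt0.
by have /andP[_ gk_lt1] := g_lt1 k.+1 isT; rewrite subr_gt0.
Qed.

(* Each [prod_onem h] solves x_{n+2} = x_{n+1} - beta_{n+1} x_n, so the identity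
   only has to be checked for n = 0, 1. *)
Lemma param_seq_comb g m M : param_seq beta g -> is_min_param beta m ->
  param_seq beta M ->
  forall n, M 0%N * prod_onem g n = (M 0%N - g 0%N) * prod_onem m n + g 0%N * prod_onem M n.
Proof.
move=> [_ _ g_beta] [[_ _ m_beta] m0] [_ _ M_beta].
have rec h : (forall n, (0 < n)%N -> beta n = h n * (1 - h n.-1)) ->
    forall n, prod_onem h n.+2 = prod_onem h n.+1 - beta n.+1 * prod_onem h n.
  by move=> h_beta n; rewrite !prod_onemS h_beta //=; ring.
pose comb n := (M 0%N - g 0%N) * prod_onem m n + g 0%N * prod_onem M n.
suff H n : M 0%N * prod_onem g n = comb n /\ M 0%N * prod_onem g n.+1 = comb n.+1.
  by move=> n; case: (H n).
elim: n => [|n [IH1 IH2]].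
  by rewrite /comb !prod_onemS !prod_onem0 m0; split; ring.
split=> //; rewrite (rec g) // mulrBr mulrCA IH1 IH2 /comb (rec m) // (rec M) //.
by ring.
Qed.

Lemma is_max_param_crit m M : is_min_param beta m -> param_seq beta M ->
  (forall e, 0 < e -> exists n, prod_onem M n < e * prod_onem m n) ->
  is_max_param beta M.
Proof.
move=> Pm PM small; split=> // g Pg; rewrite leNgt; apply/negP => M0_lt_g0.
have [/andP[M0_ge0 _] _ _] := PM.
have g0_gt0 : 0 < g 0%N by apply: le_lt_trans M0_lt_g0.
have e_gt0 : 0 < (g 0%N - M 0%N) / g 0%N by rewrite divr_gt0 ?subr_gt0.
have [n small_n] := small _ e_gt0.
have : g 0%N * prod_onem M n < (g 0%N - M 0%N) * prod_onem m n.
  rewrite (_ : (g 0%N - M 0%N) * _ = g 0%N * ((g 0%N - M 0%N) / g 0%N * prod_onem m n)).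
    by rewrite ltr_pM2l.
  by field; rewrite gt_eqF.
have := param_seq_comb Pg Pm PM n.
have := mulr_ge0 M0_ge0 (ltW (prod_onem_gt0 n Pg)).
lra.
Qed.

End ChainSequences.

Section SWParameters.
Variable R : realType.
Variables p q : R.
Hypotheses (q_gt0 : 0 < q) (q_lt1 : q < 1) (p_ge0 : 0 <= p) (p_lt1 : p < 1).

Definition sw_den n : R := 1 + q - (1 + p) * q ^+ n.+1.
Definition sw_h n : R := q * (1 - p * q ^+ n) / sw_den n.
Definition sw_m n : R := q * (1 - q ^+ n) / sw_den n.
Definition sw_M n : R := q / sw_den n * (Delta p q n / Delta p q n.+1).

Local Notation s := (Num.sqrt q).
Local Notation kd n := (SWr_d (p * q) q n / - s / q).
Local Notation knu n := (SWr_nu (p * q) q n / (- s) ^+ 2 / q ^+ 2).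

Let qX_neq0 n : q ^+ n != 0. Proof. by rewrite expf_neq0 // gt_eqF. Qed.
Let s_neq0 : s != 0. Proof. by rewrite gt_eqF ?sqrtr_gt0. Qed.

Lemma sw_den_gt0 n : 0 < sw_den n.
Proof.
have qXS_le : q ^+ n.+1 <= q by rewrite exprS ler_piMr ?(ltW q_gt0) // exprn_ile1 // ltW.
have pq_lt1 : p * q < 1 by rewrite (le_lt_trans _ p_lt1) // ler_piMr // ltW.
have : (1 + p) * q ^+ n.+1 <= (1 + p) * q by rewrite ler_wpM2l // addr_ge0.
rewrite /sw_den; nra.
Qed.

Let den_neq0 n : sw_den n != 0. Proof. by rewrite gt_eqF ?sw_den_gt0. Qed.

Lemma kernel_dE n : kd n.+1 = sw_den n / (q ^+ 2 * (q ^+ n) ^+ 2 * s).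
Proof.
rewrite /= /sw_den !exprS.
by field; rewrite qX_neq0 s_neq0 gt_eqF.
Qed.

Lemma sw_h_mul_kernel_d n : sw_h n * kd n.+1 = (1 - p * q ^+ n) / (q * (q ^+ n) ^+ 2 * s).
Proof. by rewrite kernel_dE /sw_h; field; rewrite den_neq0 s_neq0 qX_neq0 gt_eqF. Qed.

Lemma onem_sw_h_mul_kernel_d n :
  (1 - sw_h n) * kd n.+1 = (1 - q ^+ n.+1) / (q ^+ 2 * (q ^+ n) ^+ 2 * s).
Proof.
rewrite kernel_dE /sw_h /sw_den exprS.
by field; rewrite -exprS (den_neq0 n) s_neq0 qX_neq0 gt_eqF.
Qed.

Lemma kernel_beta n : knu n.+2 / (kd n.+1 * kd n.+2) = sw_h n.+1 * (1 - sw_h n).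
Proof.
have -> : knu n.+2 = ((1 - sw_h n) * kd n.+1) * (sw_h n.+1 * kd n.+2).
  rewrite onem_sw_h_mul_kernel_d sw_h_mul_kernel_d /= !exprS.
  by field; rewrite s_neq0 qX_neq0 gt_eqF.
rewrite !kernel_dE.
by field; rewrite !den_neq0 s_neq0 !qX_neq0 gt_eqF.
Qed.

Lemma shell_sw_h (d : nat -> R) : (forall n, d n.+1 = kd n.+1) ->
  forall n, shell sw_h d n = SW n p q.
Proof.
move=> d_eq; apply: three_term_ext (shell_three_term _ _)
  (SW_three_term q_gt0 q_lt1 p_ge0 p_lt1) _ _ => [[|n]|n] /=; rewrite !d_eq.
- by rewrite sw_h_mul_kernel_d; field; rewrite s_neq0 gt_eqF.
- rewrite onem_sw_h_mul_kernel_d sw_h_mul_kernel_d !exprS.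
  by field; rewrite s_neq0 qX_neq0 gt_eqF.
- rewrite (_ : _ * _ * _ = ((1 - sw_h n) * kd n.+1) * (sw_h n * kd n.+1)); last ring.
  rewrite onem_sw_h_mul_kernel_d sw_h_mul_kernel_d !exprS.
  by field; rewrite s_neq0 qX_neq0 gt_eqF.
Qed.

Lemma onem_sw_h n : 1 - sw_h n = (1 - q ^+ n.+1) / sw_den n.
Proof.
have := den_neq0 n; rewrite /sw_h /sw_den exprS => den.
by field.
Qed.

Lemma onem_sw_m n : 1 - sw_m n = (1 - p * q ^+ n.+1) / sw_den n.
Proof.
have := den_neq0 n; rewrite /sw_m /sw_den exprS => den.
by field.
Qed.

Lemma sw_h_chain n : sw_h n.+1 * (1 - sw_h n) =
  q * (1 - q ^+ n.+1) * (1 - p * q ^+ n.+1) /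
  ((1 + q - (1 + p) * q ^+ n.+1) * (1 + q - (1 + p) * q ^+ n.+2)).
Proof. by rewrite onem_sw_h /sw_h /sw_den; field; rewrite -!/(sw_den _) !den_neq0. Qed.

Lemma sw_m_chain n : sw_m n.+1 * (1 - sw_m n) = sw_h n.+1 * (1 - sw_h n).
Proof.
rewrite onem_sw_m onem_sw_h /sw_m /sw_h.
by field; rewrite !den_neq0.
Qed.

Lemma onem_sw_M n : (1 - sw_M n) * Delta p q n.+1 =
  (1 - sw_m n) * (1 - q ^+ n.+1) * Delta p q n.+2.
Proof.
have D_neq0 m : Delta p q m != 0 by rewrite gt_eqF ?Delta_gt0.
transitivity ((sw_den n * Delta p q n.+1 - q * Delta p q n) / sw_den n).
  by rewrite /sw_M; field; rewrite den_neq0 D_neq0.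
rewrite /sw_den Delta_rec // onem_sw_m -/(sw_den n).
by field; rewrite den_neq0.
Qed.

Let Delta_neq0 n : Delta p q n != 0. Proof. by rewrite gt_eqF ?Delta_gt0. Qed.

Lemma sw_M_chain n : sw_M n.+1 * (1 - sw_M n) = sw_h n.+1 * (1 - sw_h n).
Proof.
have -> : 1 - sw_M n =
    (1 - sw_m n) * (1 - q ^+ n.+1) * Delta p q n.+2 / Delta p q n.+1.
  by rewrite -onem_sw_M; field.
rewrite onem_sw_m onem_sw_h /sw_M /sw_h.
by field; rewrite !den_neq0 !Delta_neq0.
Qed.

Lemma sw_h_gt0 n : 0 < sw_h n.
Proof. by rewrite /sw_h !divr_gt0 ?mulr_gt0 ?sw_den_gt0 ?onem_aqX_gt0. Qed.

Lemma onem_sw_h_gt0 n : 0 < 1 - sw_h n.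
Proof. by rewrite onem_sw_h divr_gt0 ?sw_den_gt0 // subr_gt0 qX_lt1. Qed.

Lemma sw_m_gt0 n : (0 < n)%N -> 0 < sw_m n.
Proof.
by case: n => // n _; rewrite /sw_m divr_gt0 ?mulr_gt0 ?sw_den_gt0 // subr_gt0 qX_lt1.
Qed.

Lemma onem_sw_m_gt0 n : 0 < 1 - sw_m n.
Proof. by rewrite onem_sw_m divr_gt0 ?sw_den_gt0 ?onem_aqX_gt0. Qed.

Lemma sw_M_gt0 n : 0 < sw_M n.
Proof. by rewrite /sw_M !mulr_gt0 ?invr_gt0 ?sw_den_gt0 ?Delta_gt0. Qed.

Lemma onem_sw_M_gt0 n : 0 < 1 - sw_M n.
Proof.
rewrite -(pmulr_lgt0 _ (Delta_gt0 q_gt0 q_lt1 p_ge0 p_lt1 n.+1)) onem_sw_M.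
by rewrite !mulr_gt0 ?onem_sw_m_gt0 ?Delta_gt0 // subr_gt0 qX_lt1.
Qed.

Lemma prod_onem_sw_M n :
  prod_onem sw_M n * Delta p q 1 = prod_onem sw_m n * qpoch q q n * Delta p q n.+1.
Proof.
elim: n => [|n IH]; first by rewrite !prod_onem0 qpoch0 !mul1r.
rewrite !prod_onemS qpochS -exprS.
transitivity (prod_onem sw_M n * Delta p q 1 * (1 - sw_M n)); first ring.
rewrite IH.
transitivity (prod_onem sw_m n * qpoch q q n * ((1 - sw_M n) * Delta p q n.+1)).
  by ring.
by rewrite onem_sw_M; ring.
Qed.

Lemma prod_onem_sw_M_small e : 0 < e ->
  exists n, prod_onem sw_M n < e * prod_onem sw_m n.
Proof.
move=> e_gt0; have D1_gt0 := Delta_gt0 q_gt0 q_lt1 p_ge0 p_lt1 1.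
have onem_q_gt0 : 0 < 1 - q by rewrite subr_gt0.
have [K qK_lt] := exists_qX_lt q_gt0 q_lt1 (mulr_gt0 (mulr_gt0 e_gt0 D1_gt0) onem_q_gt0).
exists K; rewrite -(ltr_pM2r D1_gt0) prod_onem_sw_M -!mulrA [e * _]mulrCA ltr_pM2l; last first.
  by apply: prodr_gt0 => i _; apply: onem_sw_m_gt0.
have qqK_le1 := qpoch_le1 q_gt0 q_lt1 K (ltW q_gt0) (ltW q_lt1).
have D_le := Delta_le q_gt0 q_lt1 p_ge0 p_lt1 K.+1.
have D_ge0 := ltW (Delta_gt0 q_gt0 q_lt1 p_ge0 p_lt1 K.+1).
have qKS_le : q ^+ K.+1 <= q ^+ K by rewrite exprS ler_piMl ?exprn_ge0 ?ltW.
rewrite ler_pdivlMr // in D_le.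
apply: (@le_lt_trans _ _ (Delta p q K.+1)); first by rewrite ler_piMl.
nra.
Qed.

Section ChainParameters.
Variable beta : nat -> R.
Hypothesis beta_h : forall n, (0 < n)%N -> beta n = sw_h n * (1 - sw_h n.-1).

Lemma param_seq_sw_h : param_seq beta sw_h.
Proof.
by split=> [|n _|//]; rewrite ?ltW ?sw_h_gt0 //= -subr_gt0 onem_sw_h_gt0.
Qed.

Lemma is_min_param_sw_m : is_min_param beta sw_m.
Proof.
have m0 : sw_m 0 = 0 by rewrite /sw_m expr0 subrr mulr0 mul0r.
split=> //; split=> [|n n_gt0|[|n] // _].
- by rewrite m0 lexx ltr01.
- by rewrite sw_m_gt0 //= -subr_gt0 onem_sw_m_gt0.
- by rewrite beta_h // sw_m_chain.
Qed.

Lemma is_max_param_sw_M : is_max_param beta sw_M.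
Proof.
apply: is_max_param_crit is_min_param_sw_m _ prod_onem_sw_M_small.
split=> [|n _|[|n] // _]; rewrite ?beta_h ?sw_M_chain //.
  by rewrite ltW ?sw_M_gt0 //= -subr_gt0 onem_sw_M_gt0.
by rewrite sw_M_gt0 /= -subr_gt0 onem_sw_M_gt0.
Qed.

End ChainParameters.
End SWParameters.

Theorem theorem6 (R : realType) (p q : R)
  (hq0 : 0 < q) (hq1 : q < 1) (hp0 : 0 <= p) (hp1 : p < 1) :
  (exists d nu : nat -> R, three_term (kernelSW p q) d nu) /\
  forall d nu : nat -> R, three_term (kernelSW p q) d nu ->
  let beta := fun n : nat => nu n.+1 / (d n * d n.+1) in
  [/\ (forall n : nat, (0 < n)%N ->
         beta n = q * (1 - q ^+ n) * (1 - p * q ^+ n) /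
                  ((1 + q - (1 + p) * q ^+ n) * (1 + q - (1 + p) * q ^+ n.+1))),
      is_max_param beta
        (fun n : nat => q / (1 + q - (1 + p) * q ^+ n.+1) *
                        (Delta p q n / Delta p q n.+1)),
      is_min_param beta
        (fun n : nat => q * (1 - q ^+ n) / (1 + q - (1 + p) * q ^+ n.+1)),
      param_seq beta
        (fun n : nat => q * (1 - p * q ^+ n) / (1 + q - (1 + p) * q ^+ n.+1)) &
      forall n : nat,
        shell (fun n : nat => q * (1 - p * q ^+ n) / (1 + q - (1 + p) * q ^+ n.+1))
              d n = SW n p q].
Proof.
have kernel_tt := kernelSW_three_term hq0 hq1 hp0 hp1.
split; first by do 2 eexists; exact: kernel_tt.
move=> d nu d_tt beta; have [d_eq nu_eq] := three_term_uniq kernel_tt d_tt.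
have beta_h n : (0 < n)%N -> beta n = sw_h p q n * (1 - sw_h p q n.-1).
  by case: n => // n _; rewrite /beta d_eq d_eq nu_eq kernel_beta.
split.
- by case=> // n _; rewrite beta_h // sw_h_chain.
- exact: is_max_param_sw_M beta_h.
- exact: is_min_param_sw_m beta_h.
- exact: param_seq_sw_h beta_h.
- exact: shell_sw_h d_eq.
Qed.
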